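(* Fix $\alpha>0$, $\gamma>0$, $\Sigma_\epsilon>0$, $\omega_1\in[0,1)$, $\omega_2\in[0,1]$. Let $$T(x)=\left(\frac{\omega_2}{x^2}+\frac{(1-\omega_2)\alpha^2\gamma^2\Sigma_\epsilon}{(1+\gamma-x)^2}\right)^{-1/2},\qquad f_y(x)=\left(\frac{\omega_1}{x^2}+\frac{(1-\omega_1)\gamma^2\alpha^2\Sigma_\epsilon}{(1+\gamma-y)^2}\right)^{-1/2}.$$ Suppose $(\lambda_{2,t})_{t\ge0}$, with $\lambda_{2,t+1}=T(\lambda_{2,t})$ and $\lambda_{2,t}\in[1,1+\gamma)$ for all $t$, is periodic of minimal period $p$. Then the forced dynamics $\lambda_{1,t+1}=f_{\lambda_{2,t}}(\lambda_{1,t})$ is periodic of the same period: there is a sequence $(x_t)_{t\ge0}$ of minimal period $p$ with $x_{t+1}=f_{\lambda_{2,t}}(x_t)$, and for every $\lambda_{1,0}\in[1,\infty)$ one has $|\lambda_{1,t}-x_t|\to0$ as $t\to\infty$.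
   Context: This is the case $\pi_1=0$ of the two-bank leverage model, in which the large bank (leverage $\lambda_2$, memory $\omega_2$) forces the small bank (leverage $\lambda_1$, memory $\omega_1$). *)

From Stdlib Require Import Reals Lra.
Open Scope R_scope.

Definition Tmap (alpha gamma Se w2 x : R) : R :=
  / sqrt (w2 / x ^ 2 + (1 - w2) * alpha ^ 2 * gamma ^ 2 * Se / (1 + gamma - x) ^ 2).

Definition fmap (alpha gamma Se w1 y x : R) : R :=
  / sqrt (w1 / x ^ 2 + (1 - w1) * gamma ^ 2 * alpha ^ 2 * Se / (1 + gamma - y) ^ 2).

Definition min_period (u : nat -> R) (p : nat) : Prop :=
  (0 < p)%nat /\ (forall t, u (t + p)%nat = u t) /\
  (forall q, (0 < q < p)%nat -> exists t, u (t + q)%nat <> u t).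

Fixpoint forced (alpha gamma Se w1 : R) (l2 : nat -> R) (x0 : R) (t : nat) : R :=
  match t with
  | O => x0
  | S t' => fmap alpha gamma Se w1 (l2 t') (forced alpha gamma Se w1 l2 x0 t')
  end.

(** Substituting [u = 1 / x^2] turns the small bank's map [f_y] into the
    affine map [u |-> w1 u + c(y)], which contracts with ratio [w1 < 1].
    Along a [p]-periodic forcing [c_t = c(lambda_{2,t})] the composite of [p]
    steps has a unique fixed point; its orbit is the periodic solution, and
    every other orbit approaches it geometrically.  Its minimal period is [p]
    because the forcing can be read off the orbit, [c_t = u_{t+1} - w1 u_t],
    and [c] is injective on [[1, 1 + gamma)]. *)

From Stdlib Require Import Reals Lra Lia Classical.
Open Scope R_scope.

Section AffineIteration.

Variables (w : R) (c : nat -> R).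

Fixpoint affine_iter (u0 : R) (t : nat) : R :=
  match t with
  | O => u0
  | S t' => w * affine_iter u0 t' + c t'
  end.

Lemma affine_iter_decomp u0 t : affine_iter u0 t = w ^ t * u0 + affine_iter 0 t.
Proof. induction t as [|t IH]; simpl; [ring | rewrite IH; ring]. Qed.

Lemma affine_iter_sub a b t : affine_iter a t - affine_iter b t = w ^ t * (a - b).
Proof. rewrite (affine_iter_decomp a), (affine_iter_decomp b); ring. Qed.

Lemma affine_iter_periodic p u0 :
  (forall t, c (t + p)%nat = c t) -> affine_iter u0 p = u0 ->
  forall t, affine_iter u0 (t + p) = affine_iter u0 t.
Proof.
  intros Hc Hfix t; induction t as [|t IH]; simpl; [exact Hfix|].
  rewrite IH, Hc; reflexivity.
Qed.

Lemma affine_iter_periodic_forcing q u0 :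
  (forall t, affine_iter u0 (t + q) = affine_iter u0 t) ->
  forall t, c (t + q)%nat = c t.
Proof.
  intros Hu t.
  assert (E := Hu (S t)); simpl in E; rewrite (Hu t) in E; lra.
Qed.

Section LowerBound.

Variable m : R.
Hypotheses (Hw : 0 <= w) (Hm : 0 <= m) (Hc : forall t, m <= c t).

Lemma affine_iter_S_ge u0 : 0 <= u0 -> forall t, m <= affine_iter u0 (S t).
Proof.
  intros Hu0 t; induction t as [|t IH]; simpl in *.
  - specialize (Hc 0%nat); nra.
  - specialize (Hc (S t)); nra.
Qed.

Lemma affine_iter_ge_min u0 : 0 <= u0 -> forall t, Rmin m u0 <= affine_iter u0 t.
Proof.
  intros Hu0 [|t]; [apply Rmin_r|].
  apply Rle_trans with m; [apply Rmin_l | exact (affine_iter_S_ge u0 Hu0 t)].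
Qed.

End LowerBound.

Lemma affine_iter_pos m u0 : 0 <= w -> 0 < m -> (forall t, m <= c t) -> 0 < u0 ->
  forall t, 0 < affine_iter u0 t.
Proof.
  intros Hw Hm Hc Hu0 t.
  apply Rlt_le_trans with (Rmin m u0); [now apply Rmin_glb_lt|].
  apply (affine_iter_ge_min m); auto; lra.
Qed.

(** The fixed point of the [p]-fold composite [u |-> w^p u + affine_iter 0 p]. *)
Definition periodic_start (p : nat) : R := affine_iter 0 p / (1 - w ^ p).

Hypotheses (Hw : 0 <= w < 1).

Lemma affine_iter_periodic_start p :
  (0 < p)%nat -> affine_iter (periodic_start p) p = periodic_start p.
Proof.
  intros Hp; pose proof (pow_lt_1_compat w p Hw Hp).
  rewrite affine_iter_decomp; unfold periodic_start; field; lra.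
Qed.

Lemma periodic_start_pos m p :
  0 < m -> (forall t, m <= c t) -> (0 < p)%nat -> 0 < periodic_start p.
Proof.
  intros Hm Hc Hp; pose proof (pow_lt_1_compat w p Hw Hp).
  destruct p as [|p]; [lia|].
  pose proof (affine_iter_S_ge m ltac:(lra) ltac:(lra) Hc 0 (Rle_refl 0) p).
  apply Rdiv_lt_0_compat; lra.
Qed.

End AffineIteration.

Lemma inv_sqrt_inj a b : 0 < a -> 0 < b -> / sqrt a = / sqrt b -> a = b.
Proof. intros Ha Hb E; apply Rinv_eq_reg, sqrt_inj in E; lra. Qed.

Lemma inv_sqrt_lipschitz m a b : 0 < m -> m <= a -> m <= b ->
  Rabs (/ sqrt a - / sqrt b) <= Rabs (a - b) / sqrt m ^ 3.
Proof.
  intros Hm Ha Hb.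
  assert (Hq : 0 < sqrt m) by now apply sqrt_lt_R0.
  assert (Hs : sqrt m <= sqrt a) by (apply sqrt_le_1_alt; lra).
  assert (Hr : sqrt m <= sqrt b) by (apply sqrt_le_1_alt; lra).
  pose proof (sqrt_sqrt a ltac:(lra)) as Ea.
  pose proof (sqrt_sqrt b ltac:(lra)) as Eb.
  set (s := sqrt a) in *; set (r := sqrt b) in *; set (q := sqrt m) in *.
  assert (Hsr : q * q <= s * r) by nra.
  assert (Hden : q ^ 3 <= s * r * (s + r)) by (simpl; nra).
  assert (E : / s - / r = (b - a) / (s * r * (s + r))).
  { rewrite <- Ea, <- Eb; field; lra. }
  rewrite E; unfold Rdiv.
  rewrite Rabs_mult, Rabs_inv, Rabs_minus_sym, (Rabs_pos_eq (s * r * (s + r))) by nra.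
  apply Rmult_le_compat_l; [apply Rabs_pos|].
  apply Rinv_le_contravar; [apply pow_lt|]; lra.
Qed.

Lemma Un_cv_geometric_bound (u : nat -> R) (K w : R) :
  0 <= w < 1 -> (forall t, Rabs (u t) <= K * w ^ t) -> Un_cv u 0.
Proof.
  intros Hw Hu eps Heps.
  assert (HK : 0 <= K).
  { pose proof (Hu 0%nat) as Hu0; rewrite pow_O, Rmult_1_r in Hu0.
    pose proof (Rabs_pos (u 0%nat)); lra. }
  destruct (pow_lt_1_zero w ltac:(rewrite Rabs_pos_eq; lra) (eps / (K + 1)))
    as [N HN]; [apply Rdiv_lt_0_compat; lra|].
  exists N; intros t Ht; unfold R_dist; rewrite Rminus_0_r.
  specialize (HN t Ht); rewrite Rabs_pos_eq in HN by (apply pow_le; lra).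
  apply (Rmult_lt_compat_l (K + 1)) in HN; [|lra].
  replace ((K + 1) * (eps / (K + 1))) with eps in HN by (field; lra).
  pose proof (Hu t); pose proof (pow_le w t ltac:(lra)); nra.
Qed.

Lemma affine_iter_inv_sqrt_cv w c m a b :
  0 <= w < 1 -> 0 < m -> (forall t, m <= c t) -> 0 < a -> 0 < b ->
  Un_cv (fun t => Rabs (/ sqrt (affine_iter w c a t) - / sqrt (affine_iter w c b t))) 0.
Proof.
  intros Hw Hm Hc Ha Hb.
  set (mu := Rmin (Rmin m a) (Rmin m b)).
  assert (Hmu : 0 < mu) by (repeat apply Rmin_glb_lt; lra).
  assert (Hlow : forall u0, 0 < u0 -> forall t, Rmin m u0 <= affine_iter w c u0 t)
    by (intros u0 Hu0; apply (affine_iter_ge_min w c m); auto; lra).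
  apply Un_cv_geometric_bound with (K := Rabs (a - b) / sqrt mu ^ 3) (w := w); [exact Hw|].
  intro t; rewrite Rabs_Rabsolu.
  eapply Rle_trans; [apply (inv_sqrt_lipschitz mu); [exact Hmu | |]|].
  - exact (Rle_trans _ _ _ (Rmin_l _ _) (Hlow a Ha t)).
  - exact (Rle_trans _ _ _ (Rmin_r _ _) (Hlow b Hb t)).
  - rewrite affine_iter_sub, Rabs_mult, Rabs_pos_eq by (apply pow_le; lra).
    pose proof (sqrt_lt_R0 mu Hmu); right; field; lra.
Qed.

Lemma min_period_of_period_inclusion (x y : nat -> R) (p : nat) :
  (forall t, x (t + p)%nat = x t) ->
  (forall q, (forall t, x (t + q)%nat = x t) -> forall t, y (t + q)%nat = y t) ->
  min_period y p -> min_period x p.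
Proof.
  intros Hx Hrefl (Hp & _ & Hmin); split; [exact Hp | split; [exact Hx|]].
  intros q Hq; destruct (Hmin q Hq) as [t0 Ht0].
  apply NNPP; intro Hall; apply Ht0, Hrefl; intro t.
  apply NNPP; intro Hne; apply Hall; now exists t.
Qed.

Definition forcing_term (alpha gamma Se w1 y : R) : R :=
  (1 - w1) * gamma ^ 2 * alpha ^ 2 * Se / (1 + gamma - y) ^ 2.

Lemma forcing_term_ge alpha gamma Se w1 y :
  0 < gamma -> 0 <= Se -> w1 <= 1 -> 1 <= y < 1 + gamma ->
  (1 - w1) * alpha ^ 2 * Se <= forcing_term alpha gamma Se w1 y.
Proof.
  intros Hg HS Hw1 Hy; unfold forcing_term.
  assert (HK : 0 <= (1 - w1) * gamma ^ 2 * alpha ^ 2 * Se).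
  { apply Rmult_le_pos; [|lra].
    apply Rmult_le_pos; [apply Rmult_le_pos; [lra|] |]; apply pow2_ge_0. }
  assert (Hd : 0 < (1 + gamma - y) ^ 2) by (apply pow_lt; lra).
  assert (Hd' : (1 + gamma - y) ^ 2 <= gamma ^ 2) by nra.
  apply Rle_trans with ((1 - w1) * gamma ^ 2 * alpha ^ 2 * Se / gamma ^ 2).
  - right; field; lra.
  - apply Rmult_le_compat_l; [exact HK | apply Rinv_le_contravar; lra].
Qed.

Lemma forcing_term_inj alpha gamma Se w1 y y' :
  alpha <> 0 -> gamma <> 0 -> 0 < Se -> w1 < 1 -> y < 1 + gamma -> y' < 1 + gamma ->
  forcing_term alpha gamma Se w1 y = forcing_term alpha gamma Se w1 y' -> y = y'.
Proof.
  intros Ha Hg HS Hw1 Hy Hy' E; unfold forcing_term, Rdiv in E.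
  apply Rmult_eq_reg_l, Rinv_eq_reg in E.
  - nra.
  - repeat apply Rmult_integral_contrapositive_currified; try apply pow_nonzero; lra.
Qed.

Lemma inv_sqrt_inv_sq w u : 0 < u -> w / (/ sqrt u) ^ 2 = w * u.
Proof.
  intros Hu; pose proof (sqrt_lt_R0 u Hu).
  rewrite <- (sqrt_sqrt u) at 2 by lra; field; lra.
Qed.

Lemma fmap_inv_sqrt alpha gamma Se w1 y u : 0 < u ->
  fmap alpha gamma Se w1 y (/ sqrt u)
  = / sqrt (w1 * u + forcing_term alpha gamma Se w1 y).
Proof. intros Hu; unfold fmap; rewrite inv_sqrt_inv_sq by exact Hu; reflexivity. Qed.

Lemma forced_inv_sqrt alpha gamma Se w1 l2 x0 m :
  0 <= w1 -> 0 < m -> (forall t, m <= forcing_term alpha gamma Se w1 (l2 t)) ->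
  0 < x0 -> forall t, forced alpha gamma Se w1 l2 x0 t
  = / sqrt (affine_iter w1 (fun t => forcing_term alpha gamma Se w1 (l2 t)) (/ x0 ^ 2) t).
Proof.
  intros Hw1 Hm Hc Hx0 t; induction t as [|t IH]; cbn [forced affine_iter].
  - rewrite sqrt_inv, sqrt_pow2, Rinv_inv; lra.
  - rewrite IH, fmap_inv_sqrt; [reflexivity|].
    apply (affine_iter_pos _ _ m); try lra; [exact Hc|].
    apply Rinv_0_lt_compat, pow_lt; exact Hx0.
Qed.

Theorem mainTheorem4 (alpha gamma Se w1 w2 : R) (l2 : nat -> R) (p : nat) :
  0 < alpha -> 0 < gamma -> 0 < Se ->
  0 <= w1 < 1 -> 0 <= w2 <= 1 ->
  (forall t, l2 (S t) = Tmap alpha gamma Se w2 (l2 t)) ->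
  (forall t, 1 <= l2 t < 1 + gamma) ->
  min_period l2 p ->
  exists x : nat -> R,
    min_period x p /\
    (forall t, x (S t) = fmap alpha gamma Se w1 (l2 t) (x t)) /\
    (forall l10, 1 <= l10 ->
       Un_cv (fun t => Rabs (forced alpha gamma Se w1 l2 l10 t - x t)) 0).
Proof.
  intros Ha Hg HS Hw1 _ _ Hl2 Hper.
  set (c := fun t => forcing_term alpha gamma Se w1 (l2 t)).
  set (m := (1 - w1) * alpha ^ 2 * Se).
  assert (Hm : 0 < m).
  { pose proof (pow_lt alpha 2 Ha); unfold m; apply Rmult_lt_0_compat; nra. }
  assert (Hc : forall t, m <= c t) by (intro t; apply forcing_term_ge; auto; lra).
  pose proof Hper as (Hp & Hl2p & _).
  set (v0 := periodic_start w1 c p).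
  assert (Hv0 : 0 < v0) by exact (periodic_start_pos w1 c Hw1 m p Hm Hc Hp).
  assert (Hu : forall t, 0 < affine_iter w1 c v0 t)
    by (apply (affine_iter_pos w1 c m); auto; lra).
  exists (fun t => / sqrt (affine_iter w1 c v0 t)); split; [|split].
  - apply min_period_of_period_inclusion with l2; [| | exact Hper].
    + intro t; rewrite affine_iter_periodic; [reflexivity| |].
      * intro s; unfold c; rewrite Hl2p; reflexivity.
      * apply affine_iter_periodic_start; [exact Hw1 | exact Hp].
    + intros q Hxq t.
      assert (Huq : forall t, affine_iter w1 c v0 (t + q) = affine_iter w1 c v0 t)
        by (intro s; apply inv_sqrt_inj; auto).
      pose proof (Hl2 t); pose proof (Hl2 (t + q)%nat).
      apply (forcing_term_inj alpha gamma Se w1); try lra.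
      exact (affine_iter_periodic_forcing w1 c q v0 Huq t).
  - intro t; simpl; rewrite fmap_inv_sqrt by apply Hu; reflexivity.
  - intros l10 Hl10.
    apply Un_cv_ext with
      (fun t => Rabs (/ sqrt (affine_iter w1 c (/ l10 ^ 2) t) - / sqrt (affine_iter w1 c v0 t))).
    + intro t; rewrite (forced_inv_sqrt _ _ _ _ _ _ m); auto; lra.
    + apply (affine_iter_inv_sqrt_cv w1 c m); auto.
      apply Rinv_0_lt_compat, pow_lt; lra.
Qed.
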